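(* Let $\mathbb{C}$ be a category of interest and $A\in\mathbb{C}$. Then $\mathfrak{B}(A)$ is an object of $\mathbb{C}_G$.
   Context: Category of interest. A category of groups with operations is a variety of universal algebras with a set of operations $\Omega=\Omega_0\cup\Omega_1\cup\Omega_2$ ($\Omega_i$ = set of $i$-ary operations) and a set of identities $\mathbb{E}$ such that: $\mathbb{E}$ contains the group laws; the group operations, written additively $0,-,+$ (addition not necessarily commutative), lie in $\Omega_0,\Omega_1,\Omega_2$ respectively, and $\Omega_0=\{0\}$; putting $\Omega_2'=\Omega_2\setminus\{+\}$ and $\Omega_1'=\Omega_1\setminus\{-\}$, whenever $*\in\Omega_2'$ also $*^\circ\in\Omega_2'$, where $x*^\circ y=y*x$; $\mathbb{E}$ contains $x*(y+z)=x*y+x*z$ for each $*\in\Omega_2'$, and $\omega(x+y)=\omega(x)+\omega(y)$, $\omega(x)*y=\omega(x*y)$ for each $\omega\in\Omega_1'$, $*\in\Omega_2'$. A category of interest $\mathbb{C}=(\Omega,\mathbb{E})$ is such a variety which also satisfies: (Axiom 1) $x_1+(x_2*x_3)=(x_2*x_3)+x_1$ for each $*\in\Omega_2'$; (Axiom 2) for each ordered pair $( *,\bar* )\in\Omega_2'\times\Omega_2'$ there is a word $W$ with $(x_1*x_2)\bar*x_3=W\big(x_1(x_2x_3),x_1(x_3x_2),(x_2x_3)x_1,(x_3x_2)x_1,x_2(x_1x_3),x_2(x_3x_1),(x_1x_3)x_2,(x_3x_1)x_2\big)$, each juxtaposition standing for some operation in $\Omega_2'$; the right-hand side is denoted $W(x_1,x_2;x_3;*,\bar*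 )$. Let $\mathbb{E}_G\subseteq\mathbb{E}$ consist of the group laws together with the identities $x*(y+z)=x*y+x*z$, $\omega(x+y)=\omega(x)+\omega(y)$, $\omega(x)*y=\omega(x*y)$, and let $\mathbb{C}_G$ be the variety $(\Omega,\mathbb{E}_G)$. Derived actions. For objects $A,B$ of $\mathbb{C}$, a split extension $0\to A\to E\xrightarrow{p}B\to 0$ in $\mathbb{C}$ ($p$ surjective with kernel $A$, and a morphism $s$ with $ps=1_B$) induces actions $b\cdot a=s(b)+a-s(b)$ and $b*a=s(b)*a$ ($*\in\Omega_2'$); these are called derived actions of $B$ on $A$ in $\mathbb{C}$ (one writes $a*b:=b*^\circ a$). The object $\mathfrak{B}(A)$. Fix $A\in\mathbb{C}$ and let $(B_j)_{j\in J}$ range over all objects of $\mathbb{C}$ equipped with a derived action on $A$ in $\mathbb{C}$ (one index for each split extension of $A$ in $\mathbb{C}$). Consider families $x$ of maps $A\to A$ consisting of a map $a\mapsto x\cdot a$ and maps $a\mapsto x*a$ ($*\in\Omega_2'$). For $b\in B_j$ let $\mathbf{b}$ be the family $a\mapsto b\cdot a$, $a\mapsto b*a$, and let $\mathbb{B}$ be the set of all such $\mathbf b$. Operations on families: for $\mathbf{b}_i,\mathbf{b}_k\in\mathbb{B}$ and $*\in\Omega_2'$, $(\mathbf b_i*\mathbf b_k)\cdot a=a$ and $(\mathbf b_i*\mathbf b_k)\bar*a=W(b_i,b_k;a;*,\bar* )$ for $\bar*\in\Omega_2'$ (the Axiom 2 word evaluated through the given actions), iterated products being defined inductively in the same way via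 Axiom 2; $(x+y)\cdot a=x\cdot(y\cdot a)$ and $(x+y)*a=x*a+y*a$; for $\omega\in\Omega_1'$, $\omega(\mathbf b_k)$ is the family of $\omega(b_k)$, $\omega(x*y)=\omega(x)*y$, and $\omega$ is additive; $(-\mathbf b_k)\cdot a=(-b_k)\cdot a$, $(-x)*a=-(x*a)$, $(-x)\cdot a=a$ when $x$ is a product, and $-(x_1+\dots+x_n)=-x_n-\dots-x_1$. $\mathfrak{B}(A)$ is the set of all families obtained from $\mathbb{B}$ by iterating these operations, modulo the equivalence $x\sim y$ iff $x\cdot a=y\cdot a$, $x*a=y*a$ and $(\omega_1\cdots\omega_n x)\cdot a=(\omega_1\cdots\omega_n y)\cdot a$ for all $a\in A$, $*\in\Omega_2'$, $n\ge1$, $\omega_1,\dots,\omega_n\in\Omega_1'$; it is an $\Omega$-algebra with these operations. *)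

From Stdlib Require Import List.
Import ListNotations.
Set Implicit Arguments.

(** * Signatures of groups with operations
    Omega_0 = {0}; Omega_1 = {-} + O1 (O1 = Omega_1');
    Omega_2 = {+} + O2 (O2 = Omega_2'); [circ o] is the symbol o° of O2. *)
Record signature := Signature { O1 : Type; O2 : Type; circ : O2 -> O2 }.
Arguments circ {s}.

Inductive term (S : signature) : Type :=
| var : nat -> term S
| tzero : term S
| tneg : term S -> term S
| tadd : term S -> term S -> term S
| tun : O1 S -> term S -> term S
| tbin : O2 S -> term S -> term S -> term S.
Arguments var {S}. Arguments tzero {S}. Arguments tneg {S}. Arguments tadd {S}. Arguments tun {S}. Arguments tbin {S}.

Record alg (S : signature) := Alg {
  car :> Type;
  azero : car;
  aneg : car -> car;
  aadd : car -> car -> car;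
  aun : O1 S -> car -> car;
  abin : O2 S -> car -> car -> car }.

Fixpoint teval S (X : alg S) (v : nat -> car X) (t : term S) : car X :=
  match t with
  | var n => v n
  | tzero => azero X
  | tneg t => aneg X (teval X v t)
  | tadd t u => aadd X (teval X v t) (teval X v u)
  | tun w t => aun X w (teval X v t)
  | tbin o t u => abin X o (teval X v t) (teval X v u)
  end.

Definition identity (S : signature) := (term S * term S)%type.
Definition satisfies S (X : alg S) (e : identity S) : Prop :=
  forall v : nat -> car X, teval X v (fst e) = teval X v (snd e).
Definition is_model S (Eq : identity S -> Prop) (X : alg S) : Prop :=
  forall e, Eq e -> satisfies X e.

Definition vx {S} : term S := var 0.
Definition vy {S} : term S := var 1.
Definition vz {S} : term S := var 2.

Inductive EG_ids (S : signature) : identity S -> Prop :=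
| eg_assoc : EG_ids (tadd (tadd vx vy) vz, tadd vx (tadd vy vz))
| eg_zero_r : EG_ids (tadd vx tzero, vx)
| eg_zero_l : EG_ids (tadd tzero vx, vx)
| eg_inv_r : EG_ids (tadd vx (tneg vx), tzero)
| eg_inv_l : EG_ids (tadd (tneg vx) vx, tzero)
| eg_distr (o : O2 S) : EG_ids (tbin o vx (tadd vy vz), tadd (tbin o vx vy) (tbin o vx vz))
| eg_un_add (w : O1 S) : EG_ids (tun w (tadd vx vy), tadd (tun w vx) (tun w vy))
| eg_un_bin (w : O1 S) (o : O2 S) : EG_ids (tbin o (tun w vx) vy, tun w (tbin o vx vy)).

(** * Axiom 2 words.
    The eight admissible subterms (x_i juxtaposed with a product), each with
    its outer operation o and inner operation o'. *)
Inductive wshape : Type :=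
| W_1_23 | W_1_32
| W_23_1 | W_32_1
| W_2_13 | W_2_31
| W_13_2 | W_31_2 .

Inductive wword (S : signature) : Type :=
| wzero : wword S
| wneg : wword S -> wword S
| wadd : wword S -> wword S -> wword S
| wleaf : wshape -> O2 S -> O2 S -> wword S.
Arguments wzero {S}. Arguments wneg {S}. Arguments wadd {S}. Arguments wleaf {S}.

Fixpoint weval_alg S (X : alg S) (a b c : car X) (w : wword S) : car X :=
  match w with
  | wzero => azero X
  | wneg w => aneg X (weval_alg X a b c w)
  | wadd w1 w2 => aadd X (weval_alg X a b c w1) (weval_alg X a b c w2)
  | wleaf sh o o' =>
      match sh with
      | W_1_23 => abin X o a (abin X o' b c)
      | W_1_32 => abin X o a (abin X o' c b)
      | W_23_1 => abin X o (abin X o' b c) a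
      | W_32_1 => abin X o (abin X o' c b) a
      | W_2_13 => abin X o b (abin X o' a c)
      | W_2_31 => abin X o b (abin X o' c a)
      | W_13_2 => abin X o (abin X o' a c) b
      | W_31_2 => abin X o (abin X o' c a) b
      end
  end.

(** Evaluation W(x,y;a;*,*bar) "through the actions": x and y are given by
    their star-actions  sx o a = x o a ; a o x := x o° a. *)
Fixpoint weval_act S (A : alg S) (sx sy : O2 S -> car A -> car A) (a : car A)
    (w : wword S) : car A :=
  match w with
  | wzero => azero A
  | wneg w => aneg A (weval_act A sx sy a w)
  | wadd w1 w2 => aadd A (weval_act A sx sy a w1) (weval_act A sx sy a w2)
  | wleaf sh o o' =>
      match sh with
      | W_1_23 => sx o (sy o' a)
      | W_1_32 => sx o (sy (circ o') a)
      | W_23_1 => sx (circ o) (sy o' a)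
      | W_32_1 => sx (circ o) (sy (circ o') a)
      | W_2_13 => sy o (sx o' a)
      | W_2_31 => sy o (sx (circ o') a)
      | W_13_2 => sy (circ o) (sx o' a)
      | W_31_2 => sy (circ o) (sx (circ o') a)
      end
  end.

(** * Categories of interest (with a fixed choice of the Axiom 2 words). *)
Record coi (S : signature) := CoI {
  ceq : identity S -> Prop;
  ceq_G : forall e, EG_ids e -> ceq e;
  ceq_circ : forall o : O2 S, ceq (tbin (circ o) vx vy, tbin o vy vx);
  cW : O2 S -> O2 S -> wword S;
  axiom1 : forall X : alg S, is_model ceq X ->
    forall (o : O2 S) (a b c : car X), aadd X a (abin X o b c) = aadd X (abin X o b c) a;
  axiom2 : forall X : alg S, is_model ceq X ->
    forall (o o' : O2 S) (a b c : car X),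
      abin X o' (abin X o a b) c = weval_alg X a b c (cW o o') }.

Record is_hom S (X Y : alg S) (f : car X -> car Y) : Prop := {
  hom0 : f (azero X) = azero Y;
  homN : forall a, f (aneg X a) = aneg Y (f a);
  homD : forall a b, f (aadd X a b) = aadd Y (f a) (f b);
  homU : forall w a, f (aun X w a) = aun Y w (f a);
  homB : forall o a b, f (abin X o a b) = abin Y o (f a) (f b) }.

(** * Split extensions 0 -> A -i-> E -p-> B -> 0 in C with section s,
    together with the induced derived action of B on A
    (act_dot b a = s(b)+a-s(b), act_star o b a = s(b) o a, read in A via i;
    these are uniquely determined since i is injective). *)
Record splitext S (C : coi S) (A : alg S) := SplitExt {
  sE : alg S;
  sB : alg S;
  sE_C : is_model (ceq C) sE;
  sB_C : is_model (ceq C) sB;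
  sp : car sE -> car sB;
  sp_hom : is_hom sE sB sp;
  sp_surj : forall b, exists e, sp e = b;
  ss : car sB -> car sE;
  ss_hom : is_hom sB sE ss;
  ss_sect : forall b, sp (ss b) = b;
  si : car A -> car sE;
  si_hom : is_hom A sE si;
  si_inj : forall a a', si a = si a' -> a = a';
  si_ker : forall e, sp e = azero sB <-> exists a, e = si a;
  act_dot : car sB -> car A -> car A;
  act_dot_spec : forall b a,
    si (act_dot b a) = aadd sE (aadd sE (ss b) (si a)) (aneg sE (ss b));
  act_star : O2 S -> car sB -> car A -> car A;
  act_star_spec : forall o b a, si (act_star o b a) = abin sE o (ss b) (si a) }.

(** * The object B(A): formal expressions built from the families b
    (b in B_j, j ranging over all split extensions of A) by the operations. *)
Inductive bexpr S (C : coi S) (A : alg S) : Type :=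
| bgen (X : splitext C A) (b : car (sB X)) : bexpr C A
| bzero : bexpr C A
| bneg : bexpr C A -> bexpr C A
| badd : bexpr C A -> bexpr C A -> bexpr C A
| bun : O1 S -> bexpr C A -> bexpr C A
| bbin : O2 S -> bexpr C A -> bexpr C A -> bexpr C A.
Arguments bzero {S C A}. Arguments bgen {S C A}. Arguments bneg {S C A}. Arguments badd {S C A}. Arguments bun {S C A}. Arguments bbin {S C A}.

Fixpoint chain S (X : alg S) (ws : list (O1 S)) (b : car X) : car X :=
  match ws with
  | [] => b
  | w :: ws => aun X w (chain X ws b)
  end.

(** ddot ws sg x a = ((±) w1 ... wn x) . a  (sign - iff sg = true),
    following: (-b).a for generators, (-x).a = a for products,
    -(x1+...+xn) = -xn-...-x1, (x+y).a = x.(y.a), omega additive,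
    omega(x*y) = omega(x)*y. *)
Fixpoint ddot S (C : coi S) (A : alg S) (ws : list (O1 S)) (sg : bool)
    (x : bexpr C A) {struct x} : car A -> car A :=
  match x with
  | bgen X b => act_dot X (if sg then aneg (sB X) (chain (sB X) ws b)
                                 else chain (sB X) ws b)
  | bzero => fun a => a
  | bneg x => ddot ws (negb sg) x
  | badd x y => if sg then fun a => ddot ws true y (ddot ws true x a)
                else fun a => ddot ws false x (ddot ws false y a)
  | bun w x => ddot (ws ++ [w]) sg x
  | bbin _ _ _ => fun a => a
  end.

(** dstar ws x o a = (w1 ... wn x) o a ;
    (x*y) *bar a = W(x,y;a;*,*bar), (x+y)*a = x*a+y*a, (-x)*a = -(x*a). *)
Fixpoint dstar S (C : coi S) (A : alg S) (ws : list (O1 S))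
    (x : bexpr C A) {struct x} : O2 S -> car A -> car A :=
  match x with
  | bgen X b => fun o a => act_star X o (chain (sB X) ws b) a
  | bzero => fun _ _ => azero A
  | bneg x => fun o a => aneg A (dstar ws x o a)
  | badd x y => fun o a => aadd A (dstar ws x o a) (dstar ws y o a)
  | bun w x => dstar (ws ++ [w]) x
  | bbin o x y => fun o' a => weval_act A (dstar ws x) (dstar [] y) a (cW C o o')
  end.

(** The equivalence x ~ y defining B(A): x.a = y.a, x*a = y*a and
    (w1...wn x).a = (w1...wn y).a for all a, *, n >= 1, w_i. *)
Definition bequiv S (C : coi S) (A : alg S) (x y : bexpr C A) : Prop :=
  (forall (ws : list (O1 S)) (a : car A), ddot ws false x a = ddot ws false y a) /\
  (forall (o : O2 S) (a : car A), dstar [] x o a = dstar [] y o a).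

(** ~ is compatible with the operations (B(A) is an Omega-algebra). *)
Definition bcongruence S (C : coi S) (A : alg S) : Prop :=
  (forall x x' : bexpr C A, bequiv x x' ->
     bequiv (bneg x) (bneg x') /\ forall w, bequiv (bun w x) (bun w x')) /\
  (forall x x' y y' : bexpr C A, bequiv x x' -> bequiv y y' ->
     bequiv (badd x y) (badd x' y') /\ forall o, bequiv (bbin o x y) (bbin o x' y')).

Fixpoint bsubst S (C : coi S) (A : alg S) (v : nat -> bexpr C A) (t : term S)
    : bexpr C A :=
  match t with
  | var n => v n
  | tzero => bzero
  | tneg t => bneg (bsubst v t)
  | tadd t u => badd (bsubst v t) (bsubst v u)
  | tun w t => bun w (bsubst v t)
  | tbin o t u => bbin o (bsubst v t) (bsubst v u)
  end.

(** B(A) (= bexpr C A / bequiv) satisfies the identity e. *)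
Definition B_satisfies S (C : coi S) (A : alg S) (e : identity S) : Prop :=
  forall v : nat -> bexpr C A, bequiv (bsubst v (fst e)) (bsubst v (snd e)).

(** The class of a formal expression in B(A) is determined by its dot and star
    actions on [A], so each law is checked on these. Dot actions compose along
    sums and are trivial on products, so the only dot laws with content are
    the inverse laws, which hold because conjugation by [-s(b)] undoes
    conjugation by [s(b)]. The star actions take values in the centre of [A]
    (Axiom 1 in the extensions), are additive, and commute with the unary
    operations (distributivity in the extensions); the Axiom 2 words inherit
    these properties, which gives distributivity on B(A). A unary prefix on a
    star action factors through the unary operations of [A], which makes the
    equivalence compatible with them. *)

From Stdlib Require Import List.
Import ListNotations.

Declare Scope alg_scope.
Local Open Scope alg_scope.
Local Notation "a + b" := (aadd _ a b) : alg_scope.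
Local Notation "- a" := (aneg _ a) : alg_scope.

Definition env3 {S} {X : alg S} (a b c : car X) : nat -> car X :=
  fun n => match n with 0 => a | 1 => b | _ => c end.

Section GroupsWithOperations.

Context {S : signature} {X : alg S} (HX : is_model (@EG_ids S) X).
Implicit Types a b c p q u x : car X.

Lemma addA a b c : a + b + c = a + (b + c).
Proof. exact (HX _ (@eg_assoc S) (env3 a b c)). Qed.
Lemma addr0 a : a + azero X = a.
Proof. exact (HX _ (@eg_zero_r S) (env3 a a a)). Qed.
Lemma add0r a : azero X + a = a.
Proof. exact (HX _ (@eg_zero_l S) (env3 a a a)). Qed.
Lemma addrN a : a + - a = azero X.
Proof. exact (HX _ (@eg_inv_r S) (env3 a a a)). Qed.
Lemma addNr a : - a + a = azero X.
Proof. exact (HX _ (@eg_inv_l S) (env3 a a a)). Qed.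
Lemma binDr o a b c : abin X o a (b + c) = abin X o a b + abin X o a c.
Proof. exact (HX _ (@eg_distr S o) (env3 a b c)). Qed.
Lemma unD w a b : aun X w (a + b) = aun X w a + aun X w b.
Proof. exact (HX _ (@eg_un_add S w) (env3 a b b)). Qed.
Lemma bin_unl w o a b : abin X o (aun X w a) b = aun X w (abin X o a b).
Proof. exact (HX _ (@eg_un_bin S w o) (env3 a b b)). Qed.

Lemma addI a b c : a + b = a + c -> b = c.
Proof.
  intro H. rewrite <- (add0r b), <- (add0r c), <- (addNr a), !addA, H. reflexivity.
Qed.

Lemma opp_unique a b : a + b = azero X -> b = - a.
Proof. intro H. rewrite <- (add0r b), <- (addNr a), addA, H, addr0. reflexivity. Qed.

Lemma oppK a : - - a = a.
Proof. symmetry. apply opp_unique, addNr. Qed.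

Lemma oppD a b : - (a + b) = - b + - a.
Proof.
  symmetry. apply opp_unique.
  rewrite addA, <- (addA b), addrN, add0r, addrN. reflexivity.
Qed.

Definition conj (x u : car X) : car X := x + u + - x.

Lemma conjK x u : conj (- x) (conj x u) = u.
Proof.
  unfold conj. rewrite oppK, !addA, addNr, addr0, <- addA, addNr, add0r. reflexivity.
Qed.

Lemma conjNK x u : conj x (conj (- x) u) = u.
Proof. rewrite <- (oppK x) at 1. apply conjK. Qed.

Definition additive {Y : alg S} (f : car Y -> car X) : Prop :=
  forall a b : car Y, f (a + b) = f a + f b.

Definition central (p : car X) : Prop := forall u, u + p = p + u.

Lemma central0 : central (azero X).
Proof. intro u. rewrite addr0, add0r. reflexivity. Qed.

Lemma centralN p : central p -> central (- p).
Proof.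
  intros H u.
  rewrite <- (add0r (u + - p)), <- (addNr p), addA, <- (addA p), <- H,
    !addA, addrN, addr0. reflexivity.
Qed.

Lemma centralD p q : central p -> central q -> central (p + q).
Proof. intros Hp Hq u. rewrite <- addA, Hp, addA, Hq, addA. reflexivity. Qed.

Lemma oppD_central p q : central p -> - (p + q) = - p + - q.
Proof. intro H. rewrite oppD. apply centralN, H. Qed.

Lemma addACA_central p q p' q' : central q -> p + q + (p' + q') = p + p' + (q + q').
Proof.
  intro Hq. rewrite !addA. f_equal. rewrite <- !addA. f_equal. symmetry. apply Hq.
Qed.

End GroupsWithOperations.

Section AdditiveMaps.

Context {S : signature} {Y X : alg S}.
Context (HY : is_model (@EG_ids S) Y) (HX : is_model (@EG_ids S) X).
Context {f : car Y -> car X} (Hf : additive f).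

Lemma additive0 : f (azero Y) = azero X.
Proof. apply (addI HX (f (azero Y))). rewrite <- Hf, (addr0 HY), (addr0 HX). reflexivity. Qed.

Lemma additiveN (a : car Y) : f (- a) = - f a.
Proof. apply (opp_unique HX). rewrite <- Hf, (addrN HY). exact additive0. Qed.

End AdditiveMaps.

Lemma chain_app {S} (X : alg S) ws w b :
  chain X (ws ++ [w]) b = chain X ws (aun X w b).
Proof. induction ws; simpl; congruence. Qed.

Lemma chainD {S} {X : alg S} (HX : is_model (@EG_ids S) X) ws : additive (chain X ws).
Proof.
  intros a b. induction ws as [|w ws IH]; simpl; [reflexivity|].
  rewrite IH. apply (unD HX).
Qed.

Lemma chain_natural {S} {Y X : alg S} (g : car Y -> car X) :
  (forall w b, g (aun Y w b) = aun X w (g b)) ->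
  forall ws b, g (chain Y ws b) = chain X ws (g b).
Proof. intros Hg ws b. induction ws; simpl; congruence. Qed.

Section ObjectsOfInterest.

Context {S : signature} {C : coi S} {X : alg S} (HX : is_model (ceq C) X).

Lemma coi_model_EG : is_model (@EG_ids S) X.
Proof. intros e He. exact (HX _ (ceq_G C He)). Qed.

Lemma bin_circ o a b : abin X (circ o) a b = abin X o b a.
Proof. exact (HX _ (ceq_circ C o) (env3 a b b)). Qed.

Lemma bin_unr w o a b : abin X o a (aun X w b) = aun X w (abin X o a b).
Proof. rewrite <- !(bin_circ o). apply (bin_unl coi_model_EG). Qed.

End ObjectsOfInterest.

Section AxiomTwoWords.

Context {S : signature} {A : alg S} (HA : is_model (@EG_ids S) A).
Implicit Types (a : car A) (sx sy sz : O2 S -> car A -> car A) (W : wword S).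

Definition central_action (s : O2 S -> car A -> car A) : Prop :=
  forall o c, central (s o c).

Definition additive_action (s : O2 S -> car A -> car A) : Prop :=
  forall o, additive (s o).

Lemma weval_act_ext (sx sy sx' sy' : O2 S -> car A -> car A) a W :
  (forall o c, sx o c = sx' o c) -> (forall o c, sy o c = sy' o c) ->
  weval_act A sx sy a W = weval_act A sx' sy' a W.
Proof.
  intros Hx Hy. induction W as [| |W1 IH1 W2 IH2|[] o o']; simpl; congruence.
Qed.

Lemma weval_act_central sx sy a W :
  central_action sx -> central_action sy -> central (weval_act A sx sy a W).
Proof.
  intros Hx Hy. induction W as [|W IH|W1 IH1 W2 IH2|[] o o']; simpl.
  all: auto using central0, centralN, centralD.
Qed.

Lemma weval_actD sx sy W :
  central_action sx -> central_action sy -> additive_action sx -> additive_action sy ->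
  additive (fun a => weval_act A sx sy a W).
Proof.
  unfold additive_action, additive. intros Cx Cy Hx Hy a a'.
  induction W as [|W IH|W1 IH1 W2 IH2|sh o o']; simpl.
  - rewrite (addr0 HA). reflexivity.
  - rewrite IH. apply (oppD_central HA), weval_act_central; assumption.
  - rewrite IH1, IH2. apply (addACA_central HA), weval_act_central; assumption.
  - destruct sh; rewrite ?Hx, ?Hy, ?Hx; reflexivity.
Qed.

Lemma weval_act_addr sx sy sz a W :
  central_action sx -> central_action sy -> central_action sz -> additive_action sx ->
  weval_act A sx (fun o c => sy o c + sz o c) a W
  = weval_act A sx sy a W + weval_act A sx sz a W.
Proof.
  unfold additive_action, additive. intros Cx Cy Cz Hx.
  induction W as [|W IH|W1 IH1 W2 IH2|sh o o']; simpl.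
  - rewrite (addr0 HA). reflexivity.
  - rewrite IH. apply (oppD_central HA), weval_act_central; assumption.
  - rewrite IH1, IH2. apply (addACA_central HA), weval_act_central; assumption.
  - destruct sh; rewrite ?Hx; reflexivity.
Qed.

Lemma weval_act_natural (f : car A -> car A) sx sy a W :
  additive f -> (forall o c, sx o (f c) = f (sx o c)) ->
  (forall o c, sy o (f c) = f (sy o c)) ->
  weval_act A sx sy (f a) W = f (weval_act A sx sy a W).
Proof.
  intros Hf Hx Hy. induction W as [|W IH|W1 IH1 W2 IH2|sh o o']; simpl.
  - symmetry. exact (additive0 HA HA Hf).
  - rewrite IH. symmetry. exact (additiveN HA HA Hf _).
  - rewrite IH1, IH2. symmetry. apply Hf.
  - destruct sh; rewrite ?Hy, ?Hx, ?Hy; reflexivity.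
Qed.

Lemma weval_act_comp (f : car A -> car A) sx sy a W :
  additive f -> (forall o c, sy o (f c) = f (sy o c)) ->
  weval_act A (fun o c => f (sx o c)) sy a W = f (weval_act A sx sy a W).
Proof.
  intros Hf Hy. induction W as [|W IH|W1 IH1 W2 IH2|sh o o']; simpl.
  - symmetry. exact (additive0 HA HA Hf).
  - rewrite IH. symmetry. exact (additiveN HA HA Hf _).
  - rewrite IH1, IH2. symmetry. apply Hf.
  - destruct sh; rewrite ?Hy; reflexivity.
Qed.

End AxiomTwoWords.

Section DerivedActions.

Context {S : signature} {C : coi S} {A : alg S} (HA : is_model (@EG_ids S) A).
Implicit Types (x : bexpr C A) (ws : list (O1 S)).

Let extension_EG (X : splitext C A) : is_model (@EG_ids S) (sE X) :=
  coi_model_EG (sE_C X).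

Lemma ddotK x : forall ws sg a, ddot ws (negb sg) x (ddot ws sg x a) = a.
Proof.
  induction x as [X b| |x IH|x IHx y IHy|w x IH|o x IHx y IHy]; intros ws sg a; simpl.
  - apply (si_inj X). destruct sg; simpl; rewrite !(act_dot_spec X), !(homN (ss_hom X)).
    + apply (conjNK (extension_EG X)).
    + apply (conjK (extension_EG X)).
  - reflexivity.
  - apply IH.
  - destruct sg; simpl.
    + rewrite (IHy ws true), (IHx ws true). reflexivity.
    + rewrite (IHx ws false), (IHy ws false). reflexivity.
  - apply IH.
  - reflexivity.
Qed.

Lemma ddot_opp_ext x x' ws :
  (forall a, ddot ws false x a = ddot ws false x' a) ->
  forall a, ddot ws true x a = ddot ws true x' a.
Proof.
  intros H a.
  rewrite <- (ddotK x' ws true a) at 1. simpl. rewrite <- H. apply (ddotK x ws false).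
Qed.

Lemma dstar_central x : forall ws, central_action (dstar ws x).
Proof.
  induction x as [X b| |x IH|x IHx y IHy|w x IH|o x IHx y IHy]; intros ws o0 a; simpl.
  - intro u. apply (si_inj X).
    rewrite !(homD (si_hom X)), !(act_star_spec X). apply (axiom1 C (sE_C X)).
  - apply (central0 HA).
  - apply (centralN HA), IH.
  - apply (centralD HA); [apply IHx | apply IHy].
  - apply IH.
  - apply (weval_act_central HA); [apply IHx | apply IHy].
Qed.

Lemma dstar_additive x : forall ws, additive_action (dstar ws x).
Proof.
  induction x as [X b| |x IH|x IHx y IHy|w x IH|o x IHx y IHy]; intros ws o0 a a'; simpl.
  - apply (si_inj X).
    rewrite !(homD (si_hom X)), !(act_star_spec X), (homD (si_hom X)).
    apply (binDr (extension_EG X)).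
  - rewrite (addr0 HA). reflexivity.
  - rewrite IH. apply (oppD_central HA), dstar_central.
  - rewrite IHx, IHy. apply (addACA_central HA), dstar_central.
  - apply IH.
  - apply (weval_actD HA); auto using dstar_central.
Qed.

Lemma dstar_un x : forall ws w o c, dstar ws x o (aun A w c) = aun A w (dstar ws x o c).
Proof.
  induction x as [X b| |x IH|x IHx y IHy|w0 x IH|o x IHx y IHy]; intros ws w o0 c; simpl.
  - apply (si_inj X).
    rewrite !(homU (si_hom X)), !(act_star_spec X), (homU (si_hom X)).
    apply (bin_unr (sE_C X)).
  - symmetry. apply (additive0 HA HA (unD HA w)).
  - rewrite IH. symmetry. apply (additiveN HA HA (unD HA w)).
  - rewrite IHx, IHy. symmetry. apply (unD HA).
  - apply IH.
  - apply (weval_act_natural HA); [exact (unD HA w) | apply IHx | apply IHy].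
Qed.

Lemma act_star_chain (X : splitext C A) ws o b a :
  act_star X o (chain (sB X) ws b) a = chain A ws (act_star X o b a).
Proof.
  apply (chain_natural (fun b => act_star X o b a)). intros w b'.
  apply (si_inj X).
  rewrite (homU (si_hom X)), !(act_star_spec X), (homU (ss_hom X)).
  apply (bin_unl (extension_EG X)).
Qed.

Lemma dstar_chain x : forall ws o a, dstar ws x o a = chain A ws (dstar [] x o a).
Proof.
  induction x as [X b| |x IH|x IHx y IHy|w x IH|o x IHx y IHy]; intros ws o0 a; simpl.
  - apply act_star_chain.
  - symmetry. apply (additive0 HA HA (chainD HA ws)).
  - rewrite IH. symmetry. apply (additiveN HA HA (chainD HA ws)).
  - rewrite IHx, IHy. symmetry. apply (chainD HA).
  - rewrite IH, (IH [w]), chain_app. reflexivity.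
  - rewrite <- (weval_act_comp HA).
    + apply weval_act_ext; auto.
    + apply (chainD HA).
    + intros. apply (chain_natural (dstar [] y o1)). intros. apply dstar_un.
Qed.

End DerivedActions.

Section BequivCongruence.

Context {S : signature} {C : coi S} {A : alg S} (HA : is_model (@EG_ids S) A).
Implicit Types x y : bexpr C A.

Lemma bequiv_neg x x' : bequiv x x' -> bequiv (bneg x) (bneg x').
Proof.
  intros [Hdot Hstar]. split; intros; simpl.
  - apply ddot_opp_ext. intro. apply Hdot.
  - rewrite Hstar. reflexivity.
Qed.

Lemma bequiv_un w x x' : bequiv x x' -> bequiv (bun w x) (bun w x').
Proof.
  intros [Hdot Hstar]. split; intros; simpl.
  - apply Hdot.
  - rewrite (dstar_chain HA x [w]), (dstar_chain HA x' [w]), Hstar. reflexivity.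
Qed.

Lemma bequiv_add x x' y y' :
  bequiv x x' -> bequiv y y' -> bequiv (badd x y) (badd x' y').
Proof.
  intros [Hxdot Hxstar] [Hydot Hystar]. split; intros; simpl.
  - rewrite Hydot, Hxdot. reflexivity.
  - rewrite Hxstar, Hystar. reflexivity.
Qed.

Lemma bequiv_bin o x x' y y' :
  bequiv x x' -> bequiv y y' -> bequiv (bbin o x y) (bbin o x' y').
Proof.
  intros [_ Hxstar] [_ Hystar]. split; intros; simpl.
  - reflexivity.
  - apply weval_act_ext; assumption.
Qed.

Lemma B_congruence : bcongruence C A.
Proof.
  split.
  - split; [apply bequiv_neg | intro; apply bequiv_un]; assumption.
  - split; [apply bequiv_add | intro; apply bequiv_bin]; assumption.
Qed.

Lemma B_satisfies_EG e : EG_ids e -> B_satisfies C A e.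
Proof.
  intros He v. destruct He; split; intros; simpl.
  (* This settles the dot parts of all but the inverse laws, and both parts
     of the laws of the unary operations. *)
  all: try reflexivity.
  - apply (addA HA).
  - apply (addr0 HA).
  - apply (add0r HA).
  - apply (ddotK _ ws true).
  - apply (addrN HA).
  - apply (ddotK _ ws false).
  - apply (addNr HA).
  - apply (weval_act_addr HA); auto using dstar_central, dstar_additive.
Qed.

End BequivCongruence.

Theorem proposition3p1 (S : signature) (C : coi S) (A : alg S)
  (HA : is_model (ceq C) A) :
  bcongruence C A /\ (forall e : identity S, EG_ids e -> B_satisfies C A e).
Proof.
  pose proof (coi_model_EG HA) as HA_G.
  split.
  - exact (B_congruence HA_G).
  - exact (B_satisfies_EG HA_G).
Qed.
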